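(* Let $X$ be a Minkowski space and let $A=\{\mathbf{x}_1,\dots,\mathbf{x}_{2k+1}\}\subset X$ be a $d$-collinear set of odd size, listed in its natural order. Then $\mathrm{FT}(A)=\{\mathbf{x}_{k+1}\}$.
   Context: A Minkowski space is a finite-dimensional real normed space $(X,\|\cdot\|)$. A metric line is a subset of $X$ isometric to $\mathbb{R}$; a set is $d$-collinear if it is contained in a metric line. A finite $d$-collinear set $\{\mathbf{x}_1,\dots,\mathbf{x}_m\}$ is listed in its natural order if there is an isometry $f$ from it onto a subset of $\mathbb{R}$ with $f(\mathbf{x}_1)<\dots<f(\mathbf{x}_m)$. $\mathrm{FT}(A)$ is the set of minimizers of $\mathbf{x}\mapsto\sum_{\mathbf{a}\in A}\|\mathbf{x}-\mathbf{a}\|$. *)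

(* a Minkowski space is a normedModType over a
   realType R that is finite-dimensional. *)
From HB Require Import structures.
From mathcomp Require Import all_boot all_order all_algebra.
From mathcomp Require Import all_classical all_reals all_analysis.
Set Implicit Arguments. Unset Strict Implicit. Unset Printing Implicit Defensive.
Import Order.TTheory GRing.Theory Num.Theory.
Import numFieldNormedType.Exports.
Local Open Scope classical_set_scope.
Local Open Scope ring_scope.

Definition finite_dim (R : realType) (V : normedModType R) : Prop :=
  exists (n : nat) (b : 'I_n -> V),
    forall v : V, exists c : 'I_n -> R, v = \sum_(i < n) c i *: b i.

Definition metric_line (R : realType) (V : normedModType R) (L : set V) : Prop :=
  exists f : R -> V, (forall s t : R, `|f s - f t| = `|s - t|) /\ L = range f.

Definition d_collinear (R : realType) (V : normedModType R) (S : set V) : Prop :=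
  exists L : set V, metric_line L /\ S `<=` L.

Definition natural_order (R : realType) (V : normedModType R) (m : nat)
    (x : 'I_m -> V) : Prop :=
  exists g : V -> R,
    (forall i j : 'I_m, `|g (x i) - g (x j)| = `|x i - x j|) /\
    (forall i j : 'I_m, (i < j)%N -> g (x i) < g (x j)).

Definition FT (R : realType) (V : normedModType R) (m : nat) (x : 'I_m -> V)
    : set V :=
  [set p | forall q : V,
     \sum_(i < m) `|p - x i| <= \sum_(i < m) `|q - x i|].

(* Pair the point [x_i] with its mirror image [x_(2k-i)].  The median [x_k]
   lies between them on the metric line, so it realises the least possible
   value [|x_i - x_(2k-i)|] of [|p - x_i| + |p - x_(2k-i)|].  Summing over all
   pairs, [x_k] minimises the symmetrised sum, and the unpaired term
   [|p - x_k|] of the middle index is the exact excess of any other [p]. *)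
From HB Require Import structures.
From mathcomp Require Import all_boot all_order all_algebra.
From mathcomp Require Import all_classical all_reals all_analysis.
From mathcomp Require Import lra zify.
Import Order.TTheory GRing.Theory Num.Theory.
Import numFieldNormedType.Exports.
Local Open Scope classical_set_scope.
Local Open Scope ring_scope.

Lemma between_distD (R : realDomainType) (a c b : R) :
  a <= c <= b -> `|a - c| + `|c - b| = `|a - b|.
Proof.
case/andP=> ac cb; have ab := le_trans ac cb.
by rewrite !ler0_norm ?subr_le0 //; lra.
Qed.

Section NaturalOrder.
Variables (R : realType) (V : normedModType R) (n : nat) (x : 'I_n -> V).
Hypothesis x_natural : natural_order x.

Lemma natural_order_between (i j l : 'I_n) :
  (i <= j <= l)%N -> `|x i - x j| + `|x j - x l| = `|x i - x l|.
Proof.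
case: x_natural => g [g_iso g_mono] /andP[ij jl].
have g_le (a b : 'I_n) : (a <= b)%N -> g (x a) <= g (x b).
  rewrite leq_eqVlt => /orP[/eqP/val_inj -> // | ab].
  exact/ltW/g_mono.
by rewrite -!g_iso; apply: between_distD; rewrite !g_le.
Qed.

End NaturalOrder.

Lemma ltn_double_median (k : nat) : (k < k.*2.+1)%N.
Proof. by rewrite ltnS -addnn leq_addr. Qed.

Lemma rev_ord_median (k : nat) : rev_ord (inord k : 'I_(k.*2.+1)) = inord k.
Proof. by apply: val_inj; rewrite /= inordK ?ltn_double_median //; lia. Qed.

Lemma natural_order_median_between (R : realType) (V : normedModType R)
    (k : nat) (x : 'I_(k.*2.+1) -> V) (c := inord k) :
  natural_order x -> forall i,
  `|x i - x c| + `|x c - x (rev_ord i)| = `|x i - x (rev_ord i)|.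
Proof.
move=> x_natural i; have kc := ltn_double_median k.
have [ik | ki] := leqP i k.
  by apply: natural_order_between; rewrite // /c inordK //= ik; lia.
rewrite addrC (distrC (x c)) (distrC (x i)) (distrC (x i)).
by apply: natural_order_between; rewrite // /c inordK //= (ltnW ki) andbT; lia.
Qed.

Section MedianMinimizer.
Variables (R : realType) (V : normedModType R) (k : nat).
Variable x : 'I_(k.*2.+1) -> V.
Let c : 'I_(k.*2.+1) := inord k.
Hypothesis median_between : forall i,
  `|x i - x c| + `|x c - x (rev_ord i)| = `|x i - x (rev_ord i)|.

Let pair_dist (p : V) (i : 'I_(k.*2.+1)) := `|p - x i| + `|p - x (rev_ord i)|.

Let sum_pair_dist p : \sum_i pair_dist p i = (\sum_i `|p - x i|) *+ 2.
Proof.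
rewrite big_split /= mulr2n; congr (_ + _).
by rewrite [RHS](reindex_inj rev_ord_inj).
Qed.

Let pair_dist_median_le p i : pair_dist (x c) i <= pair_dist p i.
Proof.
rewrite /pair_dist (distrC (x c)) median_between (distrC p).
exact: ler_distD.
Qed.

Lemma sum_dist_median_le p :
  \sum_i `|x c - x i| + `|p - x c| <= \sum_i `|p - x i|.
Proof.
suff : (\sum_i `|x c - x i| + `|p - x c|) *+ 2 <= (\sum_i `|p - x i|) *+ 2.
  by rewrite !mulr2n; lra.
rewrite mulrnDl -!sum_pair_dist (bigD1 c) // [X in _ <= X](bigD1 c) //=.
rewrite {1 3}/pair_dist rev_ord_median subrr normr0 addr0 add0r.
rewrite -/c -mulr2n addrC lerD2r.
exact: ler_sum.
Qed.

Lemma FT_median : FT x = [set x c].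
Proof.
apply/seteqP; split => p /=.
  move=> /(_ (x c)) p_min; apply/eqP; rewrite -subr_eq0 -normr_le0.
  rewrite -(lerD2l (\sum_i `|x c - x i|)) addr0.
  exact: le_trans (sum_dist_median_le p) p_min.
move=> -> q; have := sum_dist_median_le q.
by apply: le_trans; rewrite lerDl.
Qed.

End MedianMinimizer.

Theorem corollary3p20 (R : realType) (V : normedModType R) (k : nat)
    (x : 'I_(k.*2.+1) -> V) :
  finite_dim V ->
  d_collinear (range x) ->
  natural_order x ->
  FT x = [set x (inord k)].
Proof.
(* The isometry onto R witnessing the natural order already carries the
   collinearity. *)
move=> _ _ x_natural.
exact/FT_median/natural_order_median_between.
Qed.
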